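(* Let $k\ge2$ and $n\in\mathbb{Z}$ with $\mathcal{F}_{n,k}(x)$ not identically zero. Then $$\mathcal{F}_{n,k}(x)=x^{r_{n,k}}\,(x^k+1)^{\rho_{n,k}}\,Q_{n,k}(x^k)$$ for a polynomial $Q_{n,k}(y)\in\mathbb{Z}[y]$ such that $Q_{n,k}(y)$ is not divisible by $y+1$ and $Q_{n,k}(0)\neq0$. Moreover, if $k$ is odd, then $x=-1$ is a root of $\mathcal{F}_{n,k}$ of multiplicity exactly $\rho_{n,k}$.
   Context: For $k\ge2$, the polynomials $\mathcal{F}_{n,k}(x)\in\mathbb{Z}[x]$ ($n\in\mathbb{Z}$) are defined by $\mathcal{F}_{1,k}=1$, $\mathcal{F}_{n,k}=0$ for $n=0,-1,\dots,-(k-2)$, and $\mathcal{F}_{n,k}(x)=\sum_{j=1}^{k}x^{k-j}\mathcal{F}_{n-j,k}(x)$ for all $n\in\mathbb{Z}$. This recurrence is used upwards for $n\ge2$, and downwards for $n\le-(k-1)$ as $\mathcal{F}_{n,k}=\mathcal{F}_{n+k,k}-\sum_{j=1}^{k-1}x^j\mathcal{F}_{n+j,k}$. The quantity $r_{n,k}\in\{0,\dots,k-1\}$ is defined as the residue of $(k-1)(n-1)$ modulo $k$ if $n>0$, and as the residue of $|n|+1$ modulo $k$ if $n\le0$. $\rho_{n,k}$ is defined as follows: let $a\in\{0,\dots,k\}$ be the residue of $n-2$ modulo $k+1$, and let $\rho_{n,k}\in\{0,\dots,k-1\}$ be the residue of $a$ modulo $k$. For $n\le0$ this equals $((k|n|-2)\bmod(k+1))\bmod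 k$. *)

From mathcomp Require Import all_boot all_order all_algebra.
Set Implicit Arguments. Unset Strict Implicit. Unset Printing Implicit Defensive.
Import Order.TTheory GRing.Theory Num.Theory.
Local Open Scope ring_scope.

(* history of a sequence defined by strong recursion: newest first,
   hist f m = [:: a_m; a_(m-1); ...; a_0] with a_m = f m (hist f m.-1) *)
Fixpoint hist (R : Type) (f : nat -> seq R -> R) (m : nat) : seq R :=
  match m with
  | 0 => [:: f 0%N [::]]
  | m'.+1 => let s := hist f m' in f m s :: s
  end.

(* upF k m = F_{m-(k-2), k}, for m >= 0, i.e. indices n >= -(k-2) *)
Definition up_step (k : nat) (m : nat) (s : seq {poly int}) : {poly int} :=
  if (m < k)%N then (if m == k.-1 then 1 else 0)
  else \sum_(j < k) 'X^(k - j.+1)%N * s`_j.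
Definition upF (k m : nat) : {poly int} := head 0 (hist (up_step k) m).

(* dnF k m = F_{1-m, k}, for m >= 0, i.e. indices n <= 1
   (uses the downward recurrence F_n = F_{n+k} - sum_{j=1}^{k-1} x^j F_{n+j}) *)
Definition dn_step (k : nat) (m : nat) (s : seq {poly int}) : {poly int} :=
  if (m < k)%N then (if m == 0%N then 1 else 0)
  else s`_(k.-1) - \sum_(j < k.-1) 'X^(j.+1) * s`_j.
Definition dnF (k m : nat) : {poly int} := head 0 (hist (dn_step k) m).

Definition Fib (k : nat) (n : int) : {poly int} :=
  match n with
  | Posz p => if (p <= 1)%N then dnF k (1 - p)%N else upF k (p + k - 2)%N
  | Negz p => dnF k p.+2
  end.

Definition rnk (k : nat) (n : int) : nat :=
  match n with
  | Posz p => if (0 < p)%N then ((k - 1) * (p - 1) %% k)%N else ((p + 1) %% k)%N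
  | Negz p => ((p.+1 + 1) %% k)%N
  end.

Definition rhonk (k : nat) (n : int) : nat :=
  (absz ((n - 2) %% (k.+1)%:Z)%Z %% k)%N.

(* The three-term recurrence X F_{n+1} = (X^k + 1) F_n - F_{n-k} drives
   everything.  Along the rows n = 1 - r - k p it shows that F_n is X^r times a
   polynomial P in X^k, and that the coefficient of X^r (that is P(0)) is a
   signed binomial coefficient, nonzero unless F_n = 0.  Along the rows
   n = 2 + b (k + 1) + a it shows that F_n = c X^e (X^k + 1)^rho modulo
   (X^k + 1)^(rho + 1), again with c a nonzero signed binomial coefficient;
   as X^k + 1 does not divide c X^e for e < k, exactly rho factors y + 1 can
   be pulled out of P.  For odd k, X + 1 is a simple factor of X^k + 1. *)

From mathcomp Require Import all_boot all_order all_algebra.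
From mathcomp Require Import zify ring.
Import Order.TTheory GRing.Theory Num.Theory.
Set Implicit Arguments. Unset Strict Implicit. Unset Printing Implicit Defensive.
Local Open Scope ring_scope.

Section AdicLead.
Variable R : idomainType.
Implicit Types d v p : {poly R}.

Definition adic_lead d m v p := exists w, p = d ^+ m.+1 * w + v * d ^+ m.

Lemma adic_lead_id d v : adic_lead d 0 v v.
Proof. by exists 0; rewrite mulr0 add0r expr0 mulr1. Qed.

Lemma adic_lead0 d m : adic_lead d m 0 0.
Proof. by exists 0; rewrite mulr0 mul0r addr0. Qed.

Lemma adic_lead_congr d m v v' z p :
  v' = v + z * d -> adic_lead d m v p -> adic_lead d m v' p.
Proof. by move=> -> [w ->]; exists (w - z); rewrite exprS; ring. Qed.

Lemma adic_leadB d m v1 v2 p1 p2 :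
  adic_lead d m v1 p1 -> adic_lead d m v2 p2 -> adic_lead d m (v1 - v2) (p1 - p2).
Proof. by move=> [w1 ->] [w2 ->]; exists (w1 - w2); ring. Qed.

Lemma adic_leadMl a d m v p : adic_lead d m v p -> adic_lead d m (a * v) (a * p).
Proof. by move=> [w ->]; exists (a * w); ring. Qed.

Lemma adic_leadMd d m v p : adic_lead d m v p -> adic_lead d m.+1 v (d * p).
Proof. by move=> [w ->]; exists w; rewrite !exprS; ring. Qed.

Lemma adic_lead_lt d m m' v p : (m < m')%N -> adic_lead d m' v p -> adic_lead d m 0 p.
Proof.
move=> lt_mm' [w ->]; have [n ->] : exists n, m' = (m.+1 + n)%N.
  by exists (m' - m.+1)%N; lia.
by exists (d ^+ n * (d * w + v)); rewrite mul0r addr0 exprSr exprD; ring.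
Qed.

Lemma adic_lead_divX d m v p :
  d.[0] != 0 -> adic_lead d m ('X * v) ('X * p) -> adic_lead d m v p.
Proof.
move=> d0 [w hw]; have : root w 0.
  have := congr1 (horner^~ 0) hw; rewrite !hornerE /=.
  by move/esym/eqP; rewrite mulf_eq0 expf_eq0 (negbTE d0) andbF.
case/factor_theorem => w' hw'; exists w'; apply: (mulfI (negbT (polyX_eq0 R))).
by rewrite hw hw' subr0; ring.
Qed.

End AdicLead.

Section PolyInXk.
Variables (R : idomainType) (k : nat).
Hypothesis k_gt0 : (0 < k)%N.
Implicit Types p A P Q : {poly R}.

Definition homog_Xk r p := exists P, p = 'X^r * (P \Po 'X^k).

Lemma homog_Xk0 r : homog_Xk r 0.
Proof. by exists 0; rewrite comp_poly0 mulr0. Qed.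

Lemma homog_XkXn r : homog_Xk r 'X^r.
Proof. by exists 1; rewrite -polyC1 comp_polyC mulr1. Qed.

Lemma homog_XkB r p q : homog_Xk r p -> homog_Xk r q -> homog_Xk r (p - q).
Proof. by move=> [P ->] [Q ->]; exists (P - Q); rewrite comp_polyB mulrBr. Qed.

Lemma homog_XkMu r p : homog_Xk r p -> homog_Xk r (('X^k + 1) * p).
Proof.
move=> [P ->]; exists (('X + 1) * P).
by rewrite comp_polyM comp_polyD comp_polyX comp_polyC polyC1; ring.
Qed.

Lemma homog_XkMX r p : homog_Xk r p -> homog_Xk r.+1 ('X * p).
Proof. by move=> [P ->]; exists P; rewrite exprS mulrA. Qed.

Lemma homog_XkMX_last p : homog_Xk k.-1 p -> homog_Xk 0 ('X * p).
Proof.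
move=> [P ->]; exists ('X * P).
by rewrite comp_polyM comp_polyX expr0 mul1r mulrA -exprS prednK.
Qed.

Lemma homog_Xk_divX r p : homog_Xk r.+1 ('X * p) -> homog_Xk r p.
Proof.
move=> [P hP]; exists P; apply: (mulfI (negbT (polyX_eq0 R))).
by rewrite hP exprS mulrA.
Qed.

Lemma homog_Xk_divX_last p : homog_Xk 0 ('X * p) -> homog_Xk k.-1 p.
Proof.
move=> [P hP]; have : root P 0.
  have := congr1 (horner^~ 0) hP; rewrite /= hornerM hornerX mul0r.
  by rewrite expr0 mul1r horner_comp hornerXn expr0n -(prednK k_gt0) /root => <-.
case/factor_theorem => Q hQ; exists Q; apply: (mulfI (negbT (polyX_eq0 R))).
rewrite hP expr0 mul1r hQ subr0 comp_polyM comp_polyX mulrA -exprS prednK //.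
by rewrite mulrC.
Qed.

Lemma coef_homog_Xk r P : ('X^r * (P \Po 'X^k))`_r = P`_0.
Proof. by rewrite coefXnM ltnn subnn coef_comp_poly_Xn // dvdn0 div0n. Qed.

Lemma size_Xk_add1 : size ('X^k + 1 : {poly R}) = k.+1.
Proof. by rewrite -polyC1 size_XnaddC. Qed.

Lemma Xk_add1_neq0 : ('X^k + 1 : {poly R}) != 0.
Proof. by rewrite -size_poly_eq0 size_Xk_add1. Qed.

Lemma Xk_add1_dvd_monomial A c r : (r < k)%N -> ('X^k + 1) * A = c%:P * 'X^r -> c = 0.
Proof.
move=> lt_rk eq_Ac; apply/eqP; apply: contraTT lt_rk => c_neq0; rewrite -leqNgt.
have A_neq0 : A != 0.
  apply: contra c_neq0 => /eqP A0; move/esym/eqP: eq_Ac.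
  by rewrite A0 mulr0 mulf_eq0 polyC_eq0 expf_eq0 polyX_eq0 andbF orbF.
have := congr1 (fun q : {poly R} => size q) eq_Ac.
rewrite size_mul ?Xk_add1_neq0 // size_Xk_add1 mul_polyC size_scale // size_polyXn.
by move: A_neq0; rewrite -size_poly_gt0; lia.
Qed.

Lemma divp_Xadd1 P : exists Q, P = ('X + 1) * Q + (P.[-1])%:P.
Proof.
have : root (P - (P.[-1])%:P) (-1) by rewrite /root !hornerE subrr.
case/factor_theorem => Q hQ; exists Q.
by rewrite polyCN opprK polyC1 mulrC in hQ; rewrite -hQ subrK.
Qed.

Lemma homog_Xk_split r Q c : 'X^r * ((('X + 1) * Q + c%:P) \Po 'X^k) =
  ('X^k + 1) * ('X^r * (Q \Po 'X^k)) + c%:P * 'X^r.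
Proof.
by rewrite comp_polyD comp_polyM comp_polyD comp_polyX !comp_polyC polyC1; ring.
Qed.

Lemma homog_Xk_dvd_Xk_add1 r P A : (r < k)%N ->
  'X^r * (P \Po 'X^k) = ('X^k + 1) * A ->
  exists Q, P = ('X + 1) * Q /\ A = 'X^r * (Q \Po 'X^k).
Proof.
move=> lt_rk; have [Q defP] := divp_Xadd1 P; rewrite {1}defP homog_Xk_split => eqA.
have P1 : P.[-1] = 0.
  apply: (@Xk_add1_dvd_monomial (A - 'X^r * (Q \Po 'X^k)) _ r lt_rk).
  by rewrite mulrBr -eqA addrC addKr.
exists Q; split; first by rewrite defP P1 addr0.
by apply: (mulfI Xk_add1_neq0); rewrite -eqA P1 mul0r addr0.
Qed.

Lemma homog_Xk_adic_lead_factor r m c e P : (r < k)%N -> (e < k)%N -> c != 0 ->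
  adic_lead ('X^k + 1) m (c%:P * 'X^e) ('X^r * (P \Po 'X^k)) ->
  exists Q, P = ('X + 1) ^+ m * Q /\ Q.[-1] != 0.
Proof.
move=> lt_rk lt_ek c_neq0; elim: m P => [|m IHm] P [w eqw].
  exists P; split; first by rewrite mul1r.
  apply: contra c_neq0 => /eqP P1; have [Q defP] := divp_Xadd1 P.
  move: eqw; rewrite defP P1 homog_Xk_split !mul0r !addr0 expr1 mulr1 => eqw.
  apply/eqP/(@Xk_add1_dvd_monomial ('X^r * (Q \Po 'X^k) - w) _ e lt_ek).
  by rewrite mulrBr eqw addrC addKr.
have [Q [defP eqQ]] : exists Q, P = ('X + 1) * Q /\
    ('X^k + 1) ^+ m.+1 * w + c%:P * 'X^e * ('X^k + 1) ^+ m = 'X^r * (Q \Po 'X^k).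
  by apply: homog_Xk_dvd_Xk_add1 lt_rk _; rewrite eqw !exprS; ring.
have [Q' [defQ Q'1]] := IHm Q (ex_intro _ w (esym eqQ)).
by exists Q'; rewrite defP defQ exprS mulrA.
Qed.

Lemma adic_lead_Xk_shift m c e p :
  adic_lead ('X^k + 1) m (c%:P * 'X^(e + k)) p <->
  adic_lead ('X^k + 1) m ((- c)%:P * 'X^e) p.
Proof.
split; [apply: (adic_lead_congr (z := - c%:P * 'X^e)) |
        apply: (adic_lead_congr (z := c%:P * 'X^e))]; by rewrite polyCN exprD; ring.
Qed.

Lemma adic_lead_Xk_reduce m q c e p :
  adic_lead ('X^k + 1) m (c%:P * 'X^(e + q * k)) p ->
  adic_lead ('X^k + 1) m (((-1) ^+ q * c)%:P * 'X^e) p.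
Proof.
elim: q c => [|q IHq] c; first by rewrite addn0 mul1r.
rewrite mulSnr addnA => /adic_lead_Xk_shift/IHq.
by rewrite exprS mulN1r mulrN -mulNr.
Qed.

Lemma adic_lead_Xk_divX m c e p :
  adic_lead ('X^k + 1) m (c%:P * 'X^e) ('X * p) ->
  adic_lead ('X^k + 1) m ((- c)%:P * 'X^(e + k.-1)) p.
Proof.
move=> h; apply: adic_lead_divX.
  by rewrite !hornerE expr0n -(prednK k_gt0) add0r oner_neq0.
apply: (adic_lead_congr (z := - c%:P * 'X^e)) h.
by rewrite -[in RHS](prednK k_gt0) exprS polyCN exprD; ring.
Qed.

Lemma adic_lead_Xk_step m c1 c2 e A B T :
  adic_lead ('X^k + 1) m (c1%:P * 'X^e) A ->
  adic_lead ('X^k + 1) m (c2%:P * 'X^e) B -> 'X * T = A - B ->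
  adic_lead ('X^k + 1) m ((c2 - c1)%:P * 'X^(e + k.-1)) T.
Proof.
move=> hA hB eqT; rewrite -opprB; apply: adic_lead_Xk_divX; rewrite eqT polyCB mulrBl.
exact: adic_leadB.
Qed.

End PolyInXk.

Lemma coef_Xn_add1M (R : nzRingType) n (g : {poly R}) i :
  (i < n)%N -> (('X^n + 1) * g)`_i = g`_i.
Proof. by move=> lt_in; rewrite mulrDl mul1r coefD coefXnM lt_in add0r. Qed.

Lemma Xn_add1_factor (R : numDomainType) n : odd n ->
  exists S : {poly R}, 'X^n + 1 = ('X + 1) * S /\ S.[-1] != 0.
Proof.
move=> odd_n; have : root ('X^n + 1 : {poly R}) (-1).
  by rewrite /root !hornerE -signr_odd odd_n expr1 addNr.
case/factor_theorem => S; rewrite polyCN opprK polyC1 mulrC => defS.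
exists S; split => //.
(* the derivative of [X^n + 1] at [-1] is [n], as [n - 1] is even *)
have := congr1 (fun q : {poly R} => (q^`()).[-1]) defS.
rewrite /= derivD derivXn -polyC1 derivC addr0 derivM derivD derivX derivC addr0.
rewrite !hornerE /= hornerMn hornerXn -signr_odd.
have -> : odd n.-1 = false by move: odd_n; case: (n) => //= n' /negbTE.
by rewrite expr0 addNr mul0r addr0 => <-; rewrite pnatr_eq0; case: (n) odd_n.
Qed.

Lemma nth_hist (R : Type) (d : R) f m j : (j <= m)%N ->
  nth d (hist f m) j = head d (hist f (m - j)).
Proof. by elim: m j => [|m IH] [|j] //= hj; rewrite IH. Qed.

Lemma upF_small k m : (m < k)%N -> upF k m = (if m == k.-1 then 1 else 0).
Proof. by case: m => [|m] hm; rewrite /upF /= /up_step hm. Qed.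

Lemma upF_rec k m : (0 < k <= m)%N ->
  upF k m = \sum_(j < k) 'X^(k - j.+1) * upF k (m.-1 - j).
Proof.
case: m => [|m] /andP[hk hm]; first by move: (leq_trans hk hm).
rewrite /upF /= /up_step ltnNge hm /=.
by apply: eq_bigr => j _; rewrite nth_hist //; have := ltn_ord j; lia.
Qed.

Lemma dnF_small k m : (m < k)%N -> dnF k m = (if m == 0%N then 1 else 0).
Proof. by case: m => [|m] hm; rewrite /dnF /= /dn_step hm. Qed.

Lemma dnF_rec k m : (0 < k <= m)%N ->
  dnF k m = dnF k (m.-1 - k.-1) - \sum_(j < k.-1) 'X^(j.+1) * dnF k (m.-1 - j).
Proof.
case: m => [|m] /andP[hk hm]; first by move: (leq_trans hk hm).
rewrite /dnF /= /dn_step ltnNge hm /= nth_hist; last by lia.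
congr (_ - _); apply: eq_bigr => j _.
by rewrite nth_hist //; have := ltn_ord j; lia.
Qed.

Lemma Fib_dnF k j : Fib k (1 - j%:Z) = dnF k j.
Proof.
case: j => [|[|j]] //.
by have -> : 1 - (j.+2)%:Z = Negz j by rewrite NegzE; lia.
Qed.

Lemma Fib_upF k m : (0 < k)%N -> Fib k (m%:Z + 2 - k%:Z) = upF k m.
Proof.
move=> hk; case: (leqP k m) => hm.
  have -> : m%:Z + 2 - k%:Z = Posz (m + 2 - k) by lia.
  rewrite /Fib ifN; last by lia.
  by have -> : (m + 2 - k + k - 2 = m)%N by lia.
have -> : m%:Z + 2 - k%:Z = 1 - (k - 1 - m)%N%:Z by lia.
rewrite Fib_dnF dnF_small ?upF_small; try lia.
by congr (if _ then _ else _); apply/eqP/eqP; lia.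
Qed.

Lemma Fib_rec k n : (1 < k)%N ->
  Fib k n = \sum_(j < k) 'X^(k - j.+1) * Fib k (n - j.+1%:Z).
Proof.
move=> hk; case: (ltrP 1 n) => hn.
  pose m := (absz n + k - 2)%N.
  have -> : n = m%:Z + 2 - k%:Z by rewrite /m; lia.
  rewrite Fib_upF ?upF_rec; try lia.
  apply: eq_bigr => j _; rewrite -Fib_upF; last by lia.
  by congr (_ * Fib k _); have := ltn_ord j; rewrite /m; lia.
have [j ->] : exists j : nat, n = 1 - j%:Z by exists (absz (1 - n)); lia.
have Fj i : Fib k (1 - j%:Z - i%:Z) = dnF k (j + i) by rewrite -Fib_dnF; congr Fib; lia.
case: k hk Fj => [|k] // hk Fj.
rewrite big_ord_recr /= subnn expr0 mul1r Fj dnF_rec; last by lia.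
rewrite Fib_dnF; have -> : ((j + k.+1).-1 - k = j)%N by lia.
set S := \sum_(i < k) 'X^(i.+1) * _.
suff -> : \sum_(i < k) 'X^(k.+1 - i.+1) * Fib k.+1 (1 - j%:Z - i.+1%:Z) = S.
  by rewrite addrC subrK.
rewrite /S (reindex_inj rev_ord_inj) /=; apply: eq_bigr => i _.
have hi := ltn_ord i; rewrite Fj; congr (_ * dnF _ _); [congr ('X^_) |]; lia.
Qed.

Lemma mulX_FibS k n : (1 < k)%N ->
  'X * Fib k (n + 1) = ('X^k + 1) * Fib k n - Fib k (n - k%:Z).
Proof.
move=> hk; have := Fib_rec (n + 1) hk; have := Fib_rec n hk.
case: k hk => [|k] // hk E0 E1.
rewrite big_ord_recr /= subnn expr0 mul1r in E0.
rewrite E1 big_ord_recl /= addrK mulrDr mulrDl mul1r.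
rewrite [X in _ = _ + X - _]E0 -addrA addrK subSS subn0 mulrA -exprS.
congr (_ + _); rewrite mulr_sumr; apply: eq_bigr => j _.
rewrite mulrA -exprS /bump /=; have hj := ltn_ord j.
by congr (_ * Fib _ _); [congr ('X^_) | ]; lia.
Qed.

Section FibGrid.
Variable k : nat.
Hypothesis k_gt1 : (1 < k)%N.
Let k_gt0 : (0 < k)%N := ltnW k_gt1.
Local Notation u := ('X^k + 1 : {poly int}).

Lemma Fib1 : Fib k 1 = 1.
Proof. by have := Fib_dnF k 0; rewrite subr0 dnF_small. Qed.

Lemma Fib_1_sub j : (0 < j < k)%N -> Fib k (1 - j%:Z) = 0.
Proof. by case/andP=> j_gt0 lt_jk; rewrite Fib_dnF dnF_small // ifN // -lt0n. Qed.

Lemma Fib_1_subk : Fib k (1 - k%:Z) = 1.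
Proof.
rewrite Fib_dnF dnF_rec ?k_gt0 ?leqnn // subnn dnF_small //.
rewrite big1 ?subr0 // => j _; rewrite dnF_small; last by lia.
by rewrite ifN ?mulr0 //; have := ltn_ord j; lia.
Qed.

Lemma Fib2 : Fib k 2 = 'X^(k.-1).
Proof.
have := Fib_upF k k_gt0; rewrite addrAC subrr add0r => ->; rewrite upF_rec ?k_gt0 ?leqnn //.
case: k k_gt1 => [|k'] // lt1k'; rewrite big_ord_recl /= subn0 upF_small // eqxx mulr1.
rewrite subSS subn0 big1 ?addr0 // => j _; rewrite upF_small; last by lia.
by rewrite ifN ?mulr0 //; have := ltn_ord j; rewrite /bump /=; lia.
Qed.

(* Two coordinate systems on the indices: [n = 1 - r - k p] with [r < k], in
   which [r] is [r_{n,k}] and rows [p] are [X^r]-homogeneous in [X^k], and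
   [n = 2 + b (k + 1) + a] with [a <= k], in which [rho_{n,k} = a mod k]. *)
Definition Fres r (p : int) := Fib k (1 - r%:Z - k%:Z * p).
Definition Fblk (b : int) a := Fib k (2 + b * (k%:Z + 1) + a%:Z).

Lemma Fres_rec r p : 'X * Fres r p = u * Fres r.+1 p - Fres r.+1 (p + 1).
Proof.
rewrite /Fres; have := mulX_FibS (1 - r.+1%:Z - k%:Z * p) k_gt1.
by congr (_ * Fib _ _ = _ - Fib _ _); lia.
Qed.

Lemma Fres_rec_last p : 'X * Fres k.-1 (p - 1) = u * Fres 0 p - Fres 0 (p + 1).
Proof.
rewrite /Fres; have := mulX_FibS (1 - 0%:Z - k%:Z * p) k_gt1.
by congr (_ * Fib _ _ = _ - Fib _ _); lia.
Qed.

Lemma Fblk_rec b a : 'X * Fblk b a.+1 = u * Fblk b a - Fblk (b - 1) a.+1.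
Proof.
rewrite /Fblk; have := mulX_FibS (2 + b * (k%:Z + 1) + a%:Z) k_gt1.
by congr (_ * Fib _ _ = _ - Fib _ _); lia.
Qed.

Lemma Fblk_rec_first b : 'X * Fblk (b + 1) 0 = u * Fblk b k - Fblk b 0.
Proof.
rewrite /Fblk; have := mulX_FibS (2 + b * (k%:Z + 1) + k%:Z) k_gt1.
by congr (_ * Fib _ _ = _ - Fib _ _); lia.
Qed.

Lemma FresS_eq r p : Fres r.+1 (p + 1) = u * Fres r.+1 p - 'X * Fres r p.
Proof. by rewrite Fres_rec opprB addrCA subrr addr0. Qed.

Lemma Fres0S_eq p : Fres 0 (p + 1) = u * Fres 0 p - 'X * Fres k.-1 (p - 1).
Proof. by rewrite Fres_rec_last opprB addrCA subrr addr0. Qed.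

Lemma Fres_row0 r : (r < k)%N -> Fres r 0 = (r == 0)%:R.
Proof.
rewrite /Fres mulr0 subr0; case: r => [|r] lt_rk; first by rewrite subr0 Fib1.
by rewrite Fib_1_sub.
Qed.

Lemma Fres_first1 : Fres 0 1 = 1.
Proof. by rewrite /Fres subr0 mulr1 Fib_1_subk. Qed.

Lemma Fres_last_m1 : Fres k.-1 (-1) = 'X^(k.-1).
Proof. by rewrite /Fres -Fib2; congr Fib; lia. Qed.

Lemma homog_Fres_row0 r : (r < k)%N -> homog_Xk k r (Fres r 0).
Proof.
move=> lt_rk; rewrite Fres_row0 //; case: r lt_rk => [|r] _ /=.
  exact: homog_XkXn 0.
exact: homog_Xk0.
Qed.

Lemma homog_Fres_nonneg (q : nat) :
  (forall r, (r < k)%N -> homog_Xk k r (Fres r q)) /\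
  homog_Xk k k.-1 (Fres k.-1 (q%:Z - 1)).
Proof.
elim: q => [|q [IHq IHq_last]].
  by split; [exact: homog_Fres_row0 | rewrite sub0r Fres_last_m1; exact: homog_XkXn].
rewrite -addn1 PoszD addrK; split=> [[|r] lt_rk|]; last by apply: IHq; lia.
  rewrite Fres0S_eq; apply: homog_XkB; first exact: homog_XkMu (IHq 0%N k_gt0).
  exact: homog_XkMX_last.
rewrite FresS_eq; apply: homog_XkB; first exact: homog_XkMu (IHq _ lt_rk).
exact: homog_XkMX (IHq _ (ltnW lt_rk)).
Qed.

Lemma homog_Fres_neg (q : nat) :
  (forall r, (r < k)%N -> homog_Xk k r (Fres r (- q%:Z))) /\
  homog_Xk k 0 (Fres 0 (1 - q%:Z)).
Proof.
elim: q => [|q [IHq IHq_first]].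
  split; first by rewrite oppr0; exact: homog_Fres_row0.
  by rewrite subr0 Fres_first1; exact: homog_XkXn 0.
have -> : 1 - q.+1%:Z = - q%:Z by lia.
split=> [r lt_rk|]; last exact: IHq 0%N k_gt0.
have [j -> lt_jk] : exists2 j, r = (k.-1 - j)%N & (j < k)%N.
  by exists (k.-1 - r)%N; lia.
elim: j lt_jk {r lt_rk} => [|j IHj] lt_jk.
  rewrite subn0; apply: (homog_Xk_divX_last k_gt0).
  rewrite (_ : - q.+1%:Z = - q%:Z - 1) ?Fres_rec_last; last by lia.
  apply: homog_XkB; first exact: homog_XkMu (IHq 0%N k_gt0).
  by rewrite (_ : - q%:Z + 1 = 1 - q%:Z) //; lia.
have defr : (k.-1 - j = (k.-1 - j.+1).+1)%N by lia.
apply: homog_Xk_divX; rewrite Fres_rec -defr; apply: homog_XkB.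
  exact: homog_XkMu (IHj (ltnW lt_jk)).
by rewrite (_ : - q.+1%:Z + 1 = - q%:Z); [apply: IHq | ]; lia.
Qed.

Lemma coef_Fres_nonneg (q : nat) r :
  (r < k)%N -> (Fres r q)`_r = (-1) ^+ r * 'C(q, r)%:Z.
Proof.
elim: q r => [|q IHq] r lt_rk.
  rewrite Fres_row0 //; case: r lt_rk => [|r] _ /=.
    by rewrite coefC expr0 mul1r.
  by rewrite coefC bin0n mulr0.
rewrite intS addrC; case: r lt_rk => [|r] lt_rk.
  by rewrite Fres0S_eq coefB coef_Xn_add1M // IHq // coefXM /= subr0 !bin0.
rewrite FresS_eq coefB coef_Xn_add1M // coefXM /= (IHq r.+1) // (IHq r) 1?ltnW //.
by rewrite binS PoszD exprS; ring.
Qed.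

Lemma Fres_nonneg_eq0 (q : nat) r : (q < r < k)%N -> Fres r q = 0.
Proof.
elim: q r => [|q IHq] [|r] /andP[lt_qr lt_rk] //.
  by rewrite Fres_row0.
rewrite (intS q) addrC FresS_eq !IHq ?mulr0 ?subr0 //; lia.
Qed.

Lemma coef_Fres_neg (q : nat) r :
  (r < k)%N -> (Fres r (- q%:Z))`_r = 'C(r + q - 1, r)%:Z.
Proof.
elim: q r => [|q IHq] r lt_rk.
  rewrite oppr0 Fres_row0 //; case: r lt_rk => [|r] _ /=; rewrite coefC //=.
  by rewrite bin_small //; lia.
have Fq : - q%:Z = - q.+1%:Z + 1 by lia.
rewrite -(coef_Xn_add1M _ lt_rk); elim: r lt_rk => [|r IHr] lt_rk.
  have := Fres_rec_last (- q.+1%:Z); rewrite -Fq => /eqP; rewrite eq_sym subr_eq => /eqP ->.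
  by rewrite coefD coefXM /= add0r IHq // !bin0.
have := Fres_rec r (- q.+1%:Z); rewrite -Fq => /eqP; rewrite eq_sym subr_eq => /eqP ->.
rewrite coefD coefXM /= -(coef_Xn_add1M _ (ltnW lt_rk)) IHr 1?ltnW // IHq //.
have -> : (r.+1 + q.+1 - 1 = (r + q).+1)%N by lia.
rewrite binS PoszD addrC; congr (_%:Z + _%:Z); congr 'C(_, _); lia.
Qed.

Lemma Fblk_m1 a : (a <= k)%N -> Fblk (-1) a = ((a == 0%N) || (a == k))%:R.
Proof.
move=> le_ak; rewrite /Fblk; case: (ltngtP a k) le_ak => // [lt_ak _|->]; last first.
  by rewrite orbT (_ : 2 + -1 * (k%:Z + 1) + k%:Z = 1) ?Fib1 //; lia.
rewrite orbF (_ : 2 + -1 * (k%:Z + 1) + a%:Z = 1 - (k - a)%N%:Z); last by lia.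
case: a lt_ak => [|a] lt_ak; first by rewrite subn0 Fib_1_subk.
by rewrite Fib_1_sub //; lia.
Qed.

Lemma adic_lead_Fblk_nonneg (t : nat) :
  (forall a, (a < k)%N -> adic_lead u a
     (((-1) ^+ a * 'C(t + a - 1, a)%:Z)%:P * 'X^((k - 1) * (t + a)))
     (Fblk (t%:Z - 1) a)) /\
  adic_lead u 0 (1%:P * 'X^((k - 1) * t)) (Fblk (t%:Z - 1) k).
Proof.
elim: t => [|t [IHt IHt_last]].
  rewrite sub0r; split=> [[|a] lt_ak|].
  - rewrite Fblk_m1 // expr0 mul1r muln0 -{2}(expr0 'X) mulr1; exact: adic_lead_id.
  - rewrite Fblk_m1 1?ltnW //= ltn_eqF // bin_small ?mulr0 ?mul0r; last by lia.
    exact: adic_lead0.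
  - rewrite Fblk_m1 // eqxx orbT muln0 -{2}(expr0 'X) mulr1; exact: adic_lead_id.
have -> : t.+1%:Z - 1 = t%:Z by lia.
have first : adic_lead u 0 (1%:P * 'X^((k - 1) * t.+1)) (Fblk t 0).
  have hA : adic_lead u 0 (0%:P * 'X^((k - 1) * t)) (u * Fblk (t%:Z - 1) k).
    by rewrite polyC0 mul0r; exact: adic_lead_lt (ltn0Sn 0) (adic_leadMd IHt_last).
  have hB := IHt 0%N k_gt0; rewrite addn0 in hB.
  have := Fblk_rec_first (t%:Z - 1); rewrite subrK.
  move=> /(adic_lead_Xk_step k_gt0 hA hB).
  by rewrite bin0 subr0 mulr1; congr (adic_lead _ _ (_ * 'X^_) _); lia.
have row : forall a, (a < k)%N -> adic_lead u a
    (((-1) ^+ a * 'C(t.+1 + a - 1, a)%:Z)%:P * 'X^((k - 1) * (t.+1 + a))) (Fblk t a).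
  elim=> [|a IHa] lt_ak; first by rewrite expr0 mul1r bin0 addn0.
  have hA := adic_leadMd (IHa (ltnW lt_ak)); rewrite addSnnS in hA.
  have := Fblk_rec t a; rewrite -(subrK 1 t%:Z) addrK.
  move=> /(adic_lead_Xk_step k_gt0 hA (IHt _ lt_ak)).
  congr (adic_lead _ _ (_ * 'X^_) _); last by nia.
  have -> : (t.+1 + a.+1 - 1 = (t + a).+1)%N by lia.
  have -> : (t + a.+1 - 1 = t + a)%N by lia.
  by rewrite binS PoszD exprS; congr _%:P; ring.
split=> //.
have hA : adic_lead u 0 (0%:P * 'X^((k - 1) * t)) (u * Fblk t k.-1).
  rewrite polyC0 mul0r; apply: adic_lead_lt (ltn0Sn _) (adic_leadMd (row k.-1 _)).
  by rewrite ltn_predL.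
have := Fblk_rec t k.-1; rewrite prednK // -(subrK 1 t%:Z) addrK.
move=> /(adic_lead_Xk_step k_gt0 hA IHt_last).
by rewrite subr0; congr (adic_lead _ _ (_ * 'X^_) _); nia.
Qed.

Lemma Fblk_back b a : Fblk (b - 1) a.+1 = u * Fblk b a - 'X * Fblk b a.+1.
Proof. by rewrite Fblk_rec opprB addrCA subrr addr0. Qed.

Lemma Fblk_back_first b : Fblk (b - 1) 0 = u * Fblk (b - 1) k - 'X * Fblk b 0.
Proof.
by rewrite -[in X in 'X * X](subrK 1 b) Fblk_rec_first opprB addrCA subrr addr0.
Qed.

Lemma Fblk_neg_eq0 (q : nat) a : (0 < a < k)%N -> (q < a)%N -> Fblk (-1 - q%:Z) a = 0.
Proof.
elim: q a => [|q IHq] a /andP[a_gt0 lt_ak] lt_qa.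
  by rewrite subr0 Fblk_m1 1?ltnW // gtn_eqF // ltn_eqF.
case: a a_gt0 lt_ak lt_qa => [|a] // _ lt_ak lt_qa.
have -> : -1 - q.+1%:Z = (-1 - q%:Z) - 1 by lia.
by rewrite Fblk_back !IHq ?mulr0 ?subr0 //; lia.
Qed.

Lemma adic_lead_Fblk_neg (q : nat) :
  (forall a, (a < k)%N -> adic_lead u a
     (((-1) ^+ q * 'C(q, a)%:Z)%:P * 'X^(q + (k - 1) * a)) (Fblk (-1 - q%:Z) a)) /\
  adic_lead u 0 (((-1) ^+ q)%:P * 'X^q) (Fblk (-1 - q%:Z) k).
Proof.
elim: q => [|q [IHq IHq_last]].
  rewrite subr0; split=> [[|a] lt_ak|].
  - rewrite Fblk_m1 // muln0 -{2}(expr0 'X) mulr1; exact: adic_lead_id.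
  - rewrite Fblk_m1 1?ltnW //= ltn_eqF // bin0n mulr0 mul0r; exact: adic_lead0.
  - rewrite Fblk_m1 // eqxx orbT -{2}(expr0 'X) mulr1; exact: adic_lead_id.
have -> : -1 - q.+1%:Z = (-1 - q%:Z) - 1 by lia.
set b := -1 - q%:Z.
have last : adic_lead u 0 (((-1) ^+ q.+1)%:P * 'X^(q.+1)) (Fblk (b - 1) k).
  rewrite -(prednK k_gt0) Fblk_back prednK //.
  have hA : adic_lead u 0 0 (u * Fblk b k.-1).
    exact: adic_lead_lt (ltn0Sn _) (adic_leadMd (IHq k.-1 ltac:(lia))).
  have := adic_leadB hA (adic_leadMl 'X IHq_last).
  by rewrite sub0r exprS mulN1r polyCN mulNr mulrCA -exprS.
split=> // [[|a] lt_ak].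
  rewrite Fblk_back_first.
  have hA := adic_lead_lt (ltn0Sn 0) (adic_leadMd last).
  have := adic_leadB hA (adic_leadMl 'X (IHq 0%N k_gt0)).
  by rewrite sub0r !bin0 muln0 !addn0 !mulr1 exprS mulN1r polyCN mulNr mulrCA -exprS.
have hA := adic_leadMd (IHq a (ltnW lt_ak)).
have hB := adic_leadMl 'X (IHq a.+1 lt_ak).
have exp_hB : ((q + (k - 1) * a.+1).+1 = q + (k - 1) * a + k)%N by nia.
rewrite mulrCA -exprS exp_hB in hB.
move/adic_lead_Xk_shift: hB => hB.
rewrite Fblk_back (_ : (q.+1 + (k - 1) * a.+1 = q + (k - 1) * a + k)%N); last by nia.
apply/adic_lead_Xk_shift; rewrite exprS mulN1r mulNr opprK.
have := adic_leadB hA hB.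
by rewrite -mulrBl -polyCB opprK -mulrDr -PoszD addnC -binS.
Qed.

Lemma rnk_coord n : (rnk k n < k)%N /\ exists p, n = 1 - (rnk k n)%:Z - k%:Z * p.
Proof.
case: n => [[|m]|m] /=.
- by split; [rewrite modn_small | exists 0; rewrite modn_small //; lia].
- split; first by rewrite ltn_mod.
  exists ((((k - 1) * m) %/ k)%N%:Z - m%:Z); have := divn_eq ((k - 1) * m) k.
  rewrite !subn1 succnK; nia.
- split; first by rewrite ltn_mod.
  exists ((m.+1 + 1) %/ k)%N%:Z; have := divn_eq (m.+1 + 1) k; rewrite NegzE; nia.
Qed.

Lemma rhonk_coord n : exists b (a : nat),
  [/\ (a <= k)%N, n = 2 + b * (k%:Z + 1) + a%:Z & rhonk k n = (a %% k)%N].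
Proof.
have k1_gt0 : 0 < k.+1%:Z by [].
exists ((n - 2) %/ k.+1%:Z)%Z, (absz ((n - 2) %% k.+1%:Z)%Z); split => //.
  by have := ltz_pmod (n - 2) k1_gt0; lia.
have := divz_eq (n - 2) k.+1%:Z; have := modz_ge0 (n - 2) (lt0r_neq0 k1_gt0).
by rewrite -[X in _ <= X -> _]gez0_abs; lia.
Qed.

Lemma homog_Fib n : homog_Xk k (rnk k n) (Fib k n).
Proof.
have [lt_rk [p defn]] := rnk_coord n.
have -> : Fib k n = Fres (rnk k n) p by rewrite /Fres -defn.
case: p {defn} => q; first exact: (homog_Fres_nonneg q).1.
by rewrite NegzE; exact: (homog_Fres_neg q.+1).1.
Qed.

Lemma coef_Fib_rnk_neq0 n : Fib k n != 0 -> (Fib k n)`_(rnk k n) != 0.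
Proof.
have [lt_rk [p defn]] := rnk_coord n.
have -> : Fib k n = Fres (rnk k n) p by rewrite /Fres -defn.
case: p {defn} => q Fn0.
  rewrite coef_Fres_nonneg // mulf_neq0 ?signr_eq0 // eqz_nat -lt0n bin_gt0 leqNgt.
  by apply: contra Fn0 => lt_qr; rewrite Fres_nonneg_eq0 ?lt_qr.
by rewrite NegzE coef_Fres_neg // eqz_nat -lt0n bin_gt0; lia.
Qed.

Lemma adic_lead_Fib n : Fib k n != 0 -> exists c e,
  [/\ c != 0, (e < k)%N & adic_lead u (rhonk k n) (c%:P * 'X^e) (Fib k n)].
Proof.
move=> Fn0; have [b [a [le_ak defn ->]]] := rhonk_coord n.
suff [c [e [c_neq0 lead]]] :
    exists c e, c != 0 /\ adic_lead u (a %% k) (c%:P * 'X^e) (Fblk b a).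
  exists ((-1) ^+ (e %/ k)%N * c), (e %% k)%N.
  split; rewrite ?ltn_mod ?mulf_neq0 ?signr_eq0 //.
  by apply: adic_lead_Xk_reduce; rewrite addnC -divn_eq defn.
move: Fn0; rewrite defn -/(Fblk b a); case: ltngtP le_ak => // [lt_ak _|-> _] Fn0; last first.
  rewrite modnn; case: b {defn} Fn0 => [t|q] _.
    exists 1; exists ((k - 1) * t.+1)%N; rewrite -(addrK 1 t%:Z) -PoszD addn1.
    by case: (adic_lead_Fblk_nonneg t.+1).
  by exists ((-1) ^+ q), q; rewrite signr_eq0 NegzE intS opprD; case: (adic_lead_Fblk_neg q).
rewrite modn_small //; case: b {defn} Fn0 => [t|q] Fn0.
  exists ((-1) ^+ a * 'C(t.+1 + a - 1, a)%:Z), ((k - 1) * (t.+1 + a))%N; split.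
    by rewrite mulf_neq0 ?signr_eq0 // eqz_nat -lt0n bin_gt0; lia.
  by rewrite -(addrK 1 t%:Z) -PoszD addn1; apply: (adic_lead_Fblk_nonneg t.+1).1.
exists ((-1) ^+ q * 'C(q, a)%:Z), (q + (k - 1) * a)%N; rewrite NegzE intS opprD in Fn0 *.
split; last exact: (adic_lead_Fblk_neg q).1.
rewrite mulf_neq0 ?signr_eq0 // eqz_nat -lt0n bin_gt0 leqNgt; apply: contra Fn0 => lt_qa.
by rewrite Fblk_neg_eq0 // lt_ak andbT; apply: leq_ltn_trans lt_qa.
Qed.

End FibGrid.

Theorem mainTheorem13 (k : nat) (n : int) :
  (2 <= k)%N -> Fib k n != 0 ->
  (exists Q : {poly int},
      Fib k n = 'X^(rnk k n) * ('X^k + 1) ^+ (rhonk k n) * (Q \Po 'X^k)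
      /\ ~ (exists P : {poly int}, Q = P * ('X + 1))
      /\ Q.[0] != 0)
  /\ (odd k ->
      exists G : {poly int},
        Fib k n = ('X + 1) ^+ (rhonk k n) * G /\ ~~ root G (-1)).
Proof.
move=> k_gt1 Fn0; have k_gt0 := ltnW k_gt1.
have [P defF] := homog_Fib k_gt1 n.
have [c [e [c_neq0 lt_ek lead]]] := adic_lead_Fib k_gt1 Fn0.
rewrite defF in lead.
have [Q [defP Q1]] :=
  homog_Xk_adic_lead_factor k_gt0 (rnk_coord k_gt1 n).1 lt_ek c_neq0 lead.
have defFQ : Fib k n = 'X^(rnk k n) * ('X^k + 1) ^+ (rhonk k n) * (Q \Po 'X^k).
  by rewrite defF defP comp_polyM rmorphXn /= comp_polyD comp_polyX comp_polyC polyC1 mulrA.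
split.
  exists Q; split=> //; split.
    by case=> P' defQ; move: Q1; rewrite defQ !hornerE eqxx.
  have := coef_Fib_rnk_neq0 k_gt1 Fn0.
  by rewrite defF coef_homog_Xk // -horner_coef0 defP !hornerE expr1n mul1r.
move=> odd_k; have [S [defu S1]] := Xn_add1_factor int odd_k.
exists ('X^(rnk k n) * S ^+ (rhonk k n) * (Q \Po 'X^k)); split.
  by rewrite defFQ defu exprMn; ring.
rewrite /root !hornerE horner_comp hornerXn -[(-1) ^+ k]signr_odd odd_k expr1.
by rewrite !mulf_neq0 ?expf_neq0 ?signr_eq0.
Qed.
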